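(* Let $G$ and $H$ be two nontrivial connected graphs. For $\ast\in\{\boxtimes,\circ\}$, $C_{cc}(G\ast H)=\alpha(G\ast H)$.
   Context: All graphs are finite, simple and undirected. For a graph $G$ and $S\subseteq V(G)$, the cycle interval $\langle S\rangle$ consists of the vertices of $S$ together with every vertex $w\in V(G)\setminus S$ such that $G[S\cup\{w\}]$ contains a cycle through $w$; $S$ is cycle convex if $\langle S\rangle=S$. The cycle convexity number $C_{cc}(G)$ is the maximum cardinality of a proper (i.e. $\neq V(G)$) cycle convex subset of $V(G)$. $\alpha$ denotes the independence number. The strong product $G\boxtimes H$ has vertex set $V(G)\times V(H)$ with $(g_1,h_1)\sim(g_2,h_2)$ iff ($g_1\sim g_2$, $h_1=h_2$) or ($g_1=g_2$, $h_1\sim h_2$) or ($g_1\sim g_2$, $h_1\sim h_2$). The lexicographic product $G\circ H$ has vertex set $V(G)\times V(H)$ with $(g_1,h_1)\sim(g_2,h_2)$ iff $g_1\sim g_2$, or ($g_1=g_2$ and $h_1\sim h_2$). A graph is nontrivial if it has at least two vertices. *)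

From mathcomp Require Import all_boot.
Set Implicit Arguments. Unset Strict Implicit. Unset Printing Implicit Defensive.

Section Graphs.
Variable T : finType.
Variable e : rel T.

Definition simple_graph : Prop := symmetric e /\ irreflexive e.

Definition connected_graph : Prop := forall x y : T, connect e x y.

Definition nontrivial : Prop := 1 < #|T|.

(* A duplicate-free sequence has length <= #|T|, so the
   search over lengths n <= #|T| loses nothing (this only makes it boolean). *)
Definition has_cycle_through (A : {set T}) (w : T) : bool :=
  [exists n : 'I_(#|T|).+1, exists t : n.-tuple T,
     [&& uniq t, 3 <= n, w \in t, all (fun x => x \in A) t & cycle e t]].

Definition cycle_interval (S : {set T}) : {set T} :=
  S :|: [set w | (w \notin S) && has_cycle_through (w |: S) w].

Definition cycle_convex (S : {set T}) : bool := cycle_interval S == S.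

Definition Ccc : nat :=
  \max_(S : {set T} | cycle_convex S && (S != [set: T])) #|S|.

Definition independent (S : {set T}) : bool :=
  [forall x in S, forall y in S, ~~ e x y].

Definition alpha : nat := \max_(S : {set T} | independent S) #|S|.

End Graphs.

Section Products.
Variables (T1 T2 : finType) (e1 : rel T1) (e2 : rel T2).

Definition strong_prod : rel (T1 * T2) := fun x y =>
  [|| e1 x.1 y.1 && (x.2 == y.2),
      (x.1 == y.1) && e2 x.2 y.2
    | e1 x.1 y.1 && e2 x.2 y.2].

Definition lex_prod : rel (T1 * T2) := fun x y =>
  e1 x.1 y.1 || (x.1 == y.1) && e2 x.2 y.2.

End Products.

(* A cycle convex set S is closed under triangles: if u, v are adjacent in S
   and w is a common neighbour, then u v w is a cycle through w in S + w.
   Conversely an independent set is cycle convex, since a cycle through a new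
   vertex w has two consecutive vertices other than w.  So it suffices that a
   triangle-closed set containing an edge is the whole vertex set.
   In the strong product such a set contains a vertical edge (g,h)(g,h'):
   the triangles (x,h)(x,h')(z,h) and (x,h')(z,h)(z,h') carry it along every
   edge xz of G, and horizontal edges spread along H in the same way.  Every
   triangle of the strong product is one of the lexicographic product, and a
   lexicographic edge (a,b)(c,d) in S with a ~ c forces (c,d') into S for any
   neighbour d' of d, again giving a vertical edge. *)
From mathcomp Require Import all_boot.
Set Implicit Arguments. Unset Strict Implicit. Unset Printing Implicit Defensive.

Definition triangle_closed (T : finType) (e : rel T) (S : {set T}) : Prop :=
  forall u v w, u \in S -> v \in S -> e u v -> e u w -> e v w -> w \in S.

Lemma triangle_closed_sub (T : finType) (e e' : rel T) (S : {set T}) :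
  subrel e' e -> triangle_closed e S -> triangle_closed e' S.
Proof. by move=> sub clS u v w uS vS *; apply: (clS u v); rewrite ?sub. Qed.

Section CycleConvexity.
Variables (T : finType) (e : rel T).

Lemma independent_cycle_convex (S : {set T}) : independent e S -> cycle_convex e S.
Proof.
move=> /forall_inP indS; apply/eqP/setP => w; rewrite !inE.
case wS: (w \in S) => //=; apply/negbTE/existsP => -[n /existsP [t]].
case/and5P=> uniq_t n_ge3 wt /allP all_t cycle_t.
have [i s def_s] := rot_to wt.
have inS x : x \in s -> x != w -> x \in S.
  move=> xs /negbTE xw; have := all_t x; rewrite -(mem_rot i) def_s inE xs orbT.
  by move=> /(_ isT); rewrite !inE xw.
have : 2 < size (w :: s) by rewrite -def_s size_rot size_tuple.
have : uniq (w :: s) && cycle e (w :: s) by rewrite -def_s rot_uniq rot_cycle uniq_t.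
case: s {def_s} inS => [|a [|b s]] //= inS.
rewrite !inE => /andP [/andP [/norP [wa /norP [wb _]] _] /and3P [_ eab _]] _.
have aS : a \in S by rewrite inS ?mem_head // eq_sym.
have bS : b \in S by rewrite inS // ?inE ?eqxx ?orbT // eq_sym.
by have /forall_inP/(_ b bS) := indS a aS; rewrite eab.
Qed.

Hypotheses (e_sym : symmetric e) (e_irr : irreflexive e).

Lemma cycle_convex_triangle_closed (S : {set T}) :
  cycle_convex e S -> triangle_closed e S.
Proof.
move=> /eqP ccS u v w uS vS euv euw evw; apply: contraTT isT => wS.
have uniq_wuv : uniq [:: w; u; v].
  rewrite /= !inE andbT; apply/andP; split.
    by apply: contra wS => /orP [] /eqP ->.
  by apply: contraTneq euv => <-; rewrite e_irr.
have size_wuv : 3 < #|T|.+1.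
  by rewrite ltnS -[3](card_uniqP uniq_wuv) max_card.
suff : w \in cycle_interval e S by rewrite ccS (negbTE wS).
rewrite !inE (negbTE wS) /=; apply/existsP; exists (Ordinal size_wuv).
apply/existsP; exists [tuple w; u; v].
by rewrite uniq_wuv /= !inE uS vS eqxx !orbT /= euv evw (e_sym w) euw.
Qed.

Lemma Ccc_eq_alpha :
  (exists x y, e x y) ->
  (forall S, triangle_closed e S ->
     forall u v, u \in S -> v \in S -> e u v -> S = setT) ->
  Ccc e = alpha e.
Proof.
move=> [x [y exy]] edge_full; apply/eqP; rewrite eqn_leq; apply/andP; split.
  apply/bigmax_leqP => S /andP [ccS ST]; apply: leq_bigmax_cond.
  apply/forall_inP => u uS; apply/forall_inP => v vS; apply: contra ST => euv.
  by apply/eqP; apply: (edge_full S _ u v) => //; apply: cycle_convex_triangle_closed.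
apply/bigmax_leqP => S indS; apply: leq_bigmax_cond.
rewrite independent_cycle_convex //=; apply: contraTneq exy => ST.
move: indS; rewrite ST => /forall_inP/(_ x (in_setT x))/forall_inP.
by apply; rewrite in_setT.
Qed.

End CycleConvexity.

Section ConnectedGraphs.
Variables (T : finType) (e : rel T).
Hypothesis e_conn : connected_graph e.

Lemma connected_graph_ind (P : T -> Prop) a :
  P a -> (forall x y, e x y -> P x -> P y) -> forall y, P y.
Proof.
move=> Pa Pe y; have /connectP [p] := e_conn a y.
elim: p a Pa => [|b p IHp] a Pa /= => [_ -> //|/andP [eab path_p] def_y].
exact: IHp b (Pe a b eab Pa) path_p def_y.
Qed.

Lemma connected_nontrivial_neighbour : nontrivial T -> forall x, exists y, e x y.
Proof.
move=> /card_gt1P [a [b [_ _ ab]]] x.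
have [z xz] : exists z, x != z by case: (eqVneq x a) => [->|]; [exists b | exists a].
have /connectP [[|y p] /= path_p def_z] := e_conn x z.
  by rewrite def_z eqxx in xz.
by exists y; case/andP: path_p.
Qed.

End ConnectedGraphs.

Section StrongProduct.
Variables (T1 T2 : finType) (e1 : rel T1) (e2 : rel T2).
Hypotheses (e1_sym : symmetric e1) (e2_sym : symmetric e2).

Local Notation st := (strong_prod e1 e2).
Local Notation lx := (lex_prod e1 e2).

Lemma strong_prod_hor a c b : e1 a c -> st (a, b) (c, b).
Proof. by rewrite /strong_prod /= eqxx => ->. Qed.

Lemma strong_prod_ver a b d : e2 b d -> st (a, b) (a, d).
Proof. by rewrite /strong_prod /= eqxx => ->; rewrite orbT. Qed.

Lemma strong_prod_diag a b c d : e1 a c -> e2 b d -> st (a, b) (c, d).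
Proof. by rewrite /strong_prod /= => -> ->; rewrite !orbT. Qed.

Lemma strong_prod_sub_lex : subrel st lx.
Proof.
move=> [a b] [c d]; rewrite /strong_prod /lex_prod /=.
by case/or3P => /andP [h1 h2]; rewrite h1 ?h2 ?orbT.
Qed.

Lemma strong_prod_sym : symmetric st.
Proof.
by move=> [a b] [c d]; rewrite /strong_prod /= e1_sym e2_sym (eq_sym a) (eq_sym b).
Qed.

Lemma lex_prod_sym : symmetric lx.
Proof. by move=> [a b] [c d]; rewrite /lex_prod /= e1_sym e2_sym (eq_sym a). Qed.

Lemma strong_prod_irr : irreflexive e1 -> irreflexive e2 -> irreflexive st.
Proof. by move=> e1_irr e2_irr [a b]; rewrite /strong_prod /= e1_irr e2_irr !andbF. Qed.

Lemma lex_prod_irr : irreflexive e1 -> irreflexive e2 -> irreflexive lx.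
Proof. by move=> e1_irr e2_irr [a b]; rewrite /lex_prod /= e1_irr e2_irr andbF. Qed.

Hypotheses (e1_conn : connected_graph e1) (e2_conn : connected_graph e2).
Hypotheses (T1_nontriv : nontrivial T1) (T2_nontriv : nontrivial T2).

Lemma strong_prod_edge : exists x y, st x y.
Proof.
have /card_gt1P [g [_ [_ _ _]]] := T1_nontriv.
have /card_gt1P [h [_ [_ _ _]]] := T2_nontriv.
have [h' ehh'] := connected_nontrivial_neighbour e2_conn T2_nontriv h.
by exists (g, h), (g, h'); apply: strong_prod_ver.
Qed.

Section TriangleClosed.
Variable S : {set T1 * T2}.
Hypothesis S_closed : triangle_closed st S.

Lemma vertical_edge_spread g h h' : e2 h h' -> (g, h) \in S -> (g, h') \in S ->
  forall a, (a, h) \in S /\ (a, h') \in S.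
Proof.
move=> ehh' gh gh'.
apply: (connected_graph_ind e1_conn (P := fun a => _ /\ _) (conj gh gh')).
move=> x z exz [xh xh'].
have eh'h : e2 h' h by rewrite e2_sym.
have zh : (z, h) \in S.
  apply: (S_closed xh xh').
  - exact: strong_prod_ver.
  - exact: strong_prod_hor.
  - exact: strong_prod_diag.
split=> //; apply: (S_closed xh' zh).
- exact: strong_prod_diag.
- exact: strong_prod_hor.
- exact: strong_prod_ver.
Qed.

Lemma horizontal_edge_spread g g' h : e1 g g' -> (g, h) \in S -> (g', h) \in S ->
  forall b, (g, b) \in S /\ (g', b) \in S.
Proof.
move=> egg' gh g'h.
apply: (connected_graph_ind e2_conn (P := fun b => _ /\ _) (conj gh g'h)).
move=> x z exz [gx g'x].
have eg'g : e1 g' g by rewrite e1_sym.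
have gz : (g, z) \in S.
  apply: (S_closed gx g'x).
  - exact: strong_prod_hor.
  - exact: strong_prod_ver.
  - exact: strong_prod_diag.
split=> //; apply: (S_closed g'x gz).
- exact: strong_prod_diag.
- exact: strong_prod_ver.
- exact: strong_prod_hor.
Qed.

Lemma vertical_edge_full g h h' : e2 h h' -> (g, h) \in S -> (g, h') \in S ->
  S = setT.
Proof.
move=> ehh' gh gh'; apply/setP => -[a b]; rewrite inE.
have [a' eaa'] := connected_nontrivial_neighbour e1_conn T1_nontriv a.
have [ah _] := vertical_edge_spread ehh' gh gh' a.
have [a'h _] := vertical_edge_spread ehh' gh gh' a'.
by have [] := horizontal_edge_spread eaa' ah a'h b.
Qed.

Lemma strong_prod_edge_full u v : u \in S -> v \in S -> st u v -> S = setT.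
Proof.
case: u v => [a b] [c d] uS vS.
rewrite /strong_prod /= => /or3P [] /andP [eac ebd].
- have [b' ebb'] := connected_nontrivial_neighbour e2_conn T2_nontriv b.
  move/eqP: ebd vS => <- vS.
  apply: (vertical_edge_full ebb' uS); apply: (S_closed uS vS).
  + exact: strong_prod_hor.
  + exact: strong_prod_ver.
  + by apply: strong_prod_diag; rewrite // e1_sym.
- by move/eqP: eac vS => <-; apply: vertical_edge_full ebd uS.
- apply: (vertical_edge_full ebd uS); apply: (S_closed uS vS).
  + exact: strong_prod_diag.
  + exact: strong_prod_ver.
  + by apply: strong_prod_hor; rewrite e1_sym.
Qed.

End TriangleClosed.

Lemma lex_prod_edge_full (S : {set T1 * T2}) : triangle_closed lx S ->
  forall u v, u \in S -> v \in S -> lx u v -> S = setT.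
Proof.
move=> S_closed; have S_st_closed := triangle_closed_sub strong_prod_sub_lex S_closed.
move=> [a b] [c d] uS vS.
rewrite /lex_prod /= => /orP [eac | /andP [/eqP eq_ac ebd]].
- have [d' edd'] := connected_nontrivial_neighbour e2_conn T2_nontriv d.
  apply: (vertical_edge_full S_st_closed edd' vS); apply: (S_closed _ _ _ uS vS).
  + by rewrite /lex_prod /= eac.
  + by rewrite /lex_prod /= eac.
  + exact/strong_prod_sub_lex/strong_prod_ver.
- by rewrite eq_ac in uS; apply: (vertical_edge_full S_st_closed ebd uS vS).
Qed.

End StrongProduct.

Theorem mainTheorem14 (T1 T2 : finType) (e1 : rel T1) (e2 : rel T2) :
  simple_graph e1 -> simple_graph e2 ->
  nontrivial T1 -> nontrivial T2 ->
  connected_graph e1 -> connected_graph e2 ->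
  Ccc (strong_prod e1 e2) = alpha (strong_prod e1 e2) /\
  Ccc (lex_prod e1 e2) = alpha (lex_prod e1 e2).
Proof.
move=> [e1_sym e1_irr] [e2_sym e2_irr] T1_nontriv T2_nontriv e1_conn e2_conn.
have [x [y st_xy]] := strong_prod_edge e1 e2_conn T1_nontriv T2_nontriv.
split.
  apply: Ccc_eq_alpha (strong_prod_sym e1_sym e2_sym) (strong_prod_irr e1_irr e2_irr) _ _.
    by exists x, y.
  exact: strong_prod_edge_full.
apply: Ccc_eq_alpha (lex_prod_sym e1_sym e2_sym) (lex_prod_irr e1_irr e2_irr) _ _.
  by exists x, y; apply: strong_prod_sub_lex.
exact: lex_prod_edge_full.
Qed.
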